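(* Suppose UE $i$ decodes $x_{A1}$ first (i.e., $i\overset{(1)}{\to}x_{A1}$). Then the rate region $\mathcal{R}_{1}(\mathcal{P}_{1})\cup\mathcal{R}_{2}(\mathcal{P}_{2})$ is achievable, where $$\mathcal{R}_{1}(\mathcal{P}_{1})=\bigcup_{\mathbf{p}\in\mathcal{P}_{1}}\Big\{\mathbf{r}\in\mathbb{R}_+^4 \;\Big|\; r_{i,1}\le C\Big(\tfrac{p_{i,1}}{p_{i,2}+p_{j,2}+\alpha_{i}}\Big),\; r_{i,2}\le C\Big(\tfrac{p_{i,2}}{\alpha_{i}}\Big),\; r_{j,s}\le C\Big(\tfrac{p_{j,s}}{p_{i,2}+\alpha_{j}}\Big)\ (s=1,2),\; r_{j,1}+r_{j,2}\le C\Big(\tfrac{p_{j,1}+p_{j,2}}{p_{i,2}+\alpha_{j}}\Big)\Big\},$$ $$\mathcal{R}_{2}(\mathcal{P}_{2})=\bigcup_{\mathbf{p}\in\mathcal{P}_{2}}\Big\{\mathbf{r}\in\mathbb{R}_+^4 \;\Big|\; r_{i,1}\le C\Big(\tfrac{p_{i,1}}{p_{i,2}+p_{j,2}+\alpha_{i}}\Big),\; r_{i,2}\le C\Big(\tfrac{p_{i,2}}{p_{j,2}+\alpha_{i}}\Big),\; r_{j,1}\le C\Big(\tfrac{p_{j,1}}{\alpha_{j}}\Big),\; r_{j,2}\le C\Big(\tfrac{p_{j,2}}{p_{i,2}+p_{j,1}+\alpha_{j}}\Big)\Big\},$$ with $\mathcal{P}_{1}=\mathcal{P}$ and $\mathcal{P}_{2}=\{\mathbf{p}\in\mathcal{P}\mid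 p_{j,2}-p_{j,1}>\alpha_{j}-\alpha_{i}\}$. The region $\mathcal{R}_{1}(\mathcal{P}_{1})$ is achieved by the decoding orders $i\overset{(1)}{\to}x_{A1}\overset{(2)}{\to}x_{B2}\overset{(3)}{\to}x_{A2}$ and $j\overset{(1)}{\to}(x_{B1},x_{B2})$; the region $\mathcal{R}_{2}(\mathcal{P}_{2})$ is achieved by the decoding orders $i\overset{(1)}{\to}x_{A1}\overset{(2)}{\to}x_{A2}$ and $j\overset{(1)}{\to}x_{A2}\overset{(2)}{\to}x_{B2}\overset{(3)}{\to}x_{B1}$.
   Context: Two-user downlink with a single-antenna base station (BS) and user equipments UE $i$ and UE $j$. UE $i$ requests file $W_A$ and UE $j$ requests file $W_B$; each file $W_f$ is split into subfiles, and the BS transmits four independent unit-power Gaussian codewords $x_{A1},x_{A2}$ (intended for UE $i$) and $x_{B1},x_{B2}$ (intended for UE $j$) with transmit powers $p_{i,1},p_{i,2},p_{j,1},p_{j,2}\ge 0$, i.e. $x=\sqrt{p_{i,1}}x_{A1}+\sqrt{p_{i,2}}x_{A2}+\sqrt{p_{j,1}}x_{B1}+\sqrt{p_{j,2}}x_{B2}$. Power vector $\mathbf{p}=(p_{i,1},p_{i,2},p_{j,1},p_{j,2})$, feasible set $\mathcal{P}=\{\mathbf{p}\in\mathbb{R}_+^4\mid p_{i,1}+p_{i,2}+p_{j,1}+p_{j,2}\le P\}$ for a total power budget $P>0$. UE $k$ receives $y_k=h_kx+z_k$ with $z_k\sim\mathcal{CN}(0,\sigma_k^2)$; the effective noise variance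 is $\alpha_k=\sigma_k^2/|h_k|^2$, and it is assumed $0<\alpha_i<\alpha_j$. Because UE $j$ has cached the data carried by $x_{A1}$ and UE $i$ has cached the data carried by $x_{B1}$, these are removed by cache-enabled interference cancellation, so the effective received signals (after normalizing by $h_k$) are: at UE $i$, $\sqrt{p_{i,1}}x_{A1}+\sqrt{p_{i,2}}x_{A2}+\sqrt{p_{j,2}}x_{B2}$ plus Gaussian noise of variance $\alpha_i$; at UE $j$, $\sqrt{p_{i,2}}x_{A2}+\sqrt{p_{j,1}}x_{B1}+\sqrt{p_{j,2}}x_{B2}$ plus Gaussian noise of variance $\alpha_j$. $C(\Gamma)=\log_2(1+\Gamma)$. Rate vector $\mathbf{r}=(r_{i,1},r_{i,2},r_{j,1},r_{j,2})$, where $r_{i,s}$ is the rate of $x_{As}$ and $r_{j,s}$ the rate of $x_{Bs}$. Receivers perform successive interference cancellation (SIC): signals are decoded in steps, each decoded signal being subtracted before later steps and undecoded signals treated as Gaussian noise; several signals may be jointly decoded in one step (multiple-access decoding). A signal intended for the other user may be decoded and cancelled only if its rate is supported at that decoding step at the decoding user. Notation: $k\overset{(n)}{\to}x_f$ means $x_f$ is the $n$-th decoded signal at UE $k$; $k\overset{(n)}{\to}(x_f,x_{f'})$ means $x_f,x_{f'}$ are jointly decoded in the $n$-th step. A rate vector is achievable if there is a power vector in the indicated set and decoding orders under which all intended signals (and all cancelled interfering signals) are decoded reliably at those rates. *)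

From Stdlib Require Import Reals Lra List Bool.
Import ListNotations.
Open Scope R_scope.

Inductive sig := xA1 | xA2 | xB1 | xB2.
Inductive ue := UEi | UEj.

Definition sig_eqb (f g : sig) : bool :=
  match f, g with
  | xA1, xA1 | xA2, xA2 | xB1, xB1 | xB2, xB2 => true
  | _, _ => false
  end.

Definition memb (f : sig) (l : list sig) : bool := existsb (sig_eqb f) l.

(* Signals effectively present at each UE after cache-enabled interference
   cancellation: UE i has cached x_{B1}, UE j has cached x_{A1}. *)
Definition received (k : ue) : list sig :=
  match k with
  | UEi => [xA1; xA2; xB2]
  | UEj => [xA2; xB1; xB2]
  end.

Definition intended (k : ue) : list sig :=
  match k with
  | UEi => [xA1; xA2]
  | UEj => [xB1; xB2]
  end.

Definition alpha (ai aj : R) (k : ue) : R :=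
  match k with UEi => ai | UEj => aj end.

Definition C (g : R) : R := ln (1 + g) / ln 2.

Definition sumL (v : sig -> R) (l : list sig) : R :=
  fold_right (fun f acc => v f + acc) 0 l.

(* Power vector p = (p_{i,1}, p_{i,2}, p_{j,1}, p_{j,2}) indexed by codeword;
   rate vector r likewise. *)

(* One SIC step at UE k: the set St is jointly decoded (multiple-access decoding),
   given that the signals in dec were already decoded and subtracted; the
   undecoded signals outside St are treated as Gaussian noise. *)
Definition step_ok (ai aj : R) (k : ue) (p r : sig -> R)
    (dec St : list sig) : Prop :=
  let interf :=
    sumL p (filter (fun f => andb (negb (memb f dec)) (negb (memb f St))) (received k)) in
  forall T : list sig, T <> [] -> NoDup T -> incl T St ->
    sumL r T <= C (sumL p T / (interf + alpha ai aj k)).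

Fixpoint steps_ok (ai aj : R) (k : ue) (p r : sig -> R)
    (dec : list sig) (ord : list (list sig)) : Prop :=
  match ord with
  | [] => True
  | St :: rest => step_ok ai aj k p r dec St /\ steps_ok ai aj k p r (dec ++ St) rest
  end.

Definition decodes (ai aj : R) (k : ue) (p r : sig -> R)
    (ord : list (list sig)) : Prop :=
  (forall St, In St ord -> St <> []) /\
  NoDup (concat ord) /\
  incl (concat ord) (received k) /\
  incl (intended k) (concat ord) /\
  steps_ok ai aj k p r [] ord.

Definition feasible (Ptot : R) (p : sig -> R) : Prop :=
  0 <= p xA1 /\ 0 <= p xA2 /\ 0 <= p xB1 /\ 0 <= p xB2 /\
  p xA1 + p xA2 + p xB1 + p xB2 <= Ptot.

Definition P1 (Ptot : R) (p : sig -> R) : Prop := feasible Ptot p.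

Definition P2 (Ptot ai aj : R) (p : sig -> R) : Prop :=
  feasible Ptot p /\ p xB2 - p xB1 > aj - ai.

Definition rate_nonneg (r : sig -> R) : Prop :=
  0 <= r xA1 /\ 0 <= r xA2 /\ 0 <= r xB1 /\ 0 <= r xB2.

Definition R1_at (ai aj : R) (p r : sig -> R) : Prop :=
  rate_nonneg r /\
  r xA1 <= C (p xA1 / (p xA2 + p xB2 + ai)) /\
  r xA2 <= C (p xA2 / ai) /\
  r xB1 <= C (p xB1 / (p xA2 + aj)) /\
  r xB2 <= C (p xB2 / (p xA2 + aj)) /\
  r xB1 + r xB2 <= C ((p xB1 + p xB2) / (p xA2 + aj)).

Definition R2_at (ai aj : R) (p r : sig -> R) : Prop :=
  rate_nonneg r /\
  r xA1 <= C (p xA1 / (p xA2 + p xB2 + ai)) /\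
  r xA2 <= C (p xA2 / (p xB2 + ai)) /\
  r xB1 <= C (p xB1 / aj) /\
  r xB2 <= C (p xB2 / (p xA2 + p xB1 + aj)).

Definition in_R1 (Ptot ai aj : R) (r : sig -> R) : Prop :=
  exists p, P1 Ptot p /\ R1_at ai aj p r.

Definition in_R2 (Ptot ai aj : R) (r : sig -> R) : Prop :=
  exists p, P2 Ptot ai aj p /\ R2_at ai aj p r.

Definition achievable_A1_first (Pset : (sig -> R) -> Prop) (ai aj : R)
    (r : sig -> R) : Prop :=
  rate_nonneg r /\
  exists p, Pset p /\
  exists oi oj : list (list sig),
    hd_error oi = Some [xA1] /\
    decodes ai aj UEi p r oi /\ decodes ai aj UEj p r oj.

(* Every step of the four decoding orders decodes either a single codeword, whose
   reliability is one SINR constraint, or the pair (x_{B1}, x_{B2}), whose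
   reliability is the three-constraint MAC region; the constraints defining R_1 and
   R_2 are exactly these, with two exceptions where an interfering codeword is
   cancelled at a receiver other than the one its rate budget refers to.  The budget
   of x_{B2} in R_1 is computed with noise p_{i,2} + alpha_j, while UE i cancels it
   with noise p_{i,2} + alpha_i, smaller since alpha_i < alpha_j; the budget of
   x_{A2} in R_2 is computed with noise p_{j,2} + alpha_i, while UE j cancels it with
   noise p_{j,1} + alpha_j, smaller precisely on P_2.  As C is increasing, both
   cancellations are reliable. *)
From Stdlib Require Import Reals List Lra Lia.
Import ListNotations.
Open Scope R_scope.

Lemma NoDup_incl_singleton (A : Type) (a : A) (T : list A) :
  T <> [] -> NoDup T -> incl T [a] -> T = [a].
Proof.
  intros hT hnd hincl.
  pose proof (NoDup_incl_length hnd hincl) as hlen.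
  destruct T as [| x [| y T]]; [congruence | | simpl in hlen; lia].
  now destruct (hincl x (or_introl eq_refl)) as [-> | []].
Qed.

Lemma NoDup_incl_pair (A : Type) (f g : A) (T : list A) :
  T <> [] -> NoDup T -> incl T [f; g] ->
  T = [f] \/ T = [g] \/ T = [f; g] \/ T = [g; f].
Proof.
  intros hT hnd hincl.
  pose proof (NoDup_incl_length hnd hincl) as hlen.
  destruct T as [| x [| y [| z T]]]; [congruence | | | simpl in hlen; lia].
  - destruct (hincl x (or_introl eq_refl)) as [-> | [-> | []]]; tauto.
  - apply NoDup_cons_iff in hnd as [hxy _].
    destruct (hincl x (or_introl eq_refl)) as [-> | [-> | []]];
      destruct (hincl y (or_intror (or_introl eq_refl))) as [-> | [-> | []]];
      simpl in hxy; tauto.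
Qed.

Definition interference (p : sig -> R) (k : ue) (dec St : list sig) : R :=
  sumL p (filter (fun f => andb (negb (memb f dec)) (negb (memb f St))) (received k)).

Lemma step_ok_singleton (ai aj : R) (k : ue) (p r : sig -> R) (dec : list sig) (f : sig) :
  r f <= C (p f / (interference p k dec [f] + alpha ai aj k)) ->
  step_ok ai aj k p r dec [f].
Proof.
  intros hf T hT hnd hincl.
  rewrite (NoDup_incl_singleton _ _ _ hT hnd hincl); simpl.
  now rewrite !Rplus_0_r.
Qed.

Lemma step_ok_pair (ai aj : R) (k : ue) (p r : sig -> R) (dec : list sig) (f g : sig) :
  let noise := interference p k dec [f; g] + alpha ai aj k in
  r f <= C (p f / noise) -> r g <= C (p g / noise) ->
  r f + r g <= C ((p f + p g) / noise) ->
  step_ok ai aj k p r dec [f; g].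
Proof.
  intros noise hf hg hfg T hT hnd hincl.
  destruct (NoDup_incl_pair _ _ _ _ hT hnd hincl) as [-> | [-> | [-> | ->]]];
    simpl; rewrite ?Rplus_0_r; [exact hf | exact hg | exact hfg |].
  now rewrite (Rplus_comm (r g)), (Rplus_comm (p g)).
Qed.

Lemma C_le_compat (x y : R) : 0 <= x -> x <= y -> C x <= C y.
Proof.
  intros hx hxy; unfold C, Rdiv.
  apply Rmult_le_compat_r.
  - left; apply Rinv_0_lt_compat; pose proof ln_lt_2; lra.
  - destruct hxy as [hlt | <-]; [left; apply ln_increasing; lra | lra].
Qed.

Lemma C_noise_antitone (s n m : R) :
  0 <= s -> 0 < n -> n <= m -> C (s / m) <= C (s / n).
Proof.
  intros hs hn hnm; apply C_le_compat.
  - apply Rmult_le_pos; [lra | left; apply Rinv_0_lt_compat; lra].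
  - apply Rmult_le_compat_l; [lra | apply Rinv_le_contravar; lra].
Qed.

Ltac decoding_order_shape :=
  split; [intros St hSt; simpl in hSt; intuition (subst; discriminate) |];
  split; [simpl; repeat constructor; simpl; intuition discriminate |];
  split; [intros f hf; simpl in *; tauto |];
  split; [intros f hf; simpl in *; tauto |].

Section Regions.

Variables (Ptot ai aj : R) (p r : sig -> R).
Hypotheses (hai : 0 < ai) (hij : ai < aj).

Lemma R1_decodes_UEi :
  feasible Ptot p -> R1_at ai aj p r ->
  decodes ai aj UEi p r [[xA1]; [xB2]; [xA2]].
Proof.
  intros (_ & hA2 & _ & hB2 & _) (_ & hrA1 & hrA2 & _ & hrB2 & _).
  decoding_order_shape.
  repeat split; apply step_ok_singleton; unfold interference; simpl;
    rewrite ?Rplus_0_r, ?Rplus_0_l.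
  - exact hrA1.
  - apply (Rle_trans _ _ _ hrB2), C_noise_antitone; lra.
  - exact hrA2.
Qed.

Lemma R1_decodes_UEj :
  R1_at ai aj p r -> decodes ai aj UEj p r [[xB1; xB2]].
Proof.
  intros (_ & _ & _ & hrB1 & hrB2 & hrB12).
  decoding_order_shape.
  split; [| exact I].
  apply step_ok_pair; unfold interference; simpl; rewrite Rplus_0_r; assumption.
Qed.

Lemma R2_decodes_UEi :
  R2_at ai aj p r -> decodes ai aj UEi p r [[xA1]; [xA2]].
Proof.
  intros (_ & hrA1 & hrA2 & _).
  decoding_order_shape.
  repeat split; apply step_ok_singleton; unfold interference; simpl;
    rewrite ?Rplus_0_r; assumption.
Qed.

Lemma R2_decodes_UEj :
  P2 Ptot ai aj p -> R2_at ai aj p r ->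
  decodes ai aj UEj p r [[xB2]; [xA2]; [xB1]].
Proof.
  intros ((_ & hA2 & hB1 & _ & _) & hgap) (_ & _ & hrA2 & hrB1 & hrB2).
  decoding_order_shape.
  repeat split; apply step_ok_singleton; unfold interference; simpl;
    rewrite ?Rplus_0_r, ?Rplus_0_l.
  - exact hrB2.
  - apply (Rle_trans _ _ _ hrA2), C_noise_antitone; lra.
  - exact hrB1.
Qed.

Lemma R1_decoding_orders :
  P1 Ptot p -> R1_at ai aj p r ->
  decodes ai aj UEi p r [[xA1]; [xB2]; [xA2]] /\
  decodes ai aj UEj p r [[xB1; xB2]].
Proof.
  intros hp hr; split; [exact (R1_decodes_UEi hp hr) | exact (R1_decodes_UEj hr)].
Qed.

Lemma R2_decoding_orders :
  P2 Ptot ai aj p -> R2_at ai aj p r ->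
  decodes ai aj UEi p r [[xA1]; [xA2]] /\
  decodes ai aj UEj p r [[xB2]; [xA2]; [xB1]].
Proof.
  intros hp hr; split; [exact (R2_decodes_UEi hr) | exact (R2_decodes_UEj hp hr)].
Qed.

End Regions.

Theorem proposition1 (Ptot ai aj : R) (hP : 0 < Ptot) (hai : 0 < ai)
    (hij : ai < aj) :
  (forall r, in_R1 Ptot ai aj r -> achievable_A1_first (P1 Ptot) ai aj r) /\
  (forall r, in_R2 Ptot ai aj r -> achievable_A1_first (P2 Ptot ai aj) ai aj r) /\
  (forall p r, P1 Ptot p -> R1_at ai aj p r ->
     decodes ai aj UEi p r [[xA1]; [xB2]; [xA2]] /\
     decodes ai aj UEj p r [[xB1; xB2]]) /\
  (forall p r, P2 Ptot ai aj p -> R2_at ai aj p r ->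
     decodes ai aj UEi p r [[xA1]; [xA2]] /\
     decodes ai aj UEj p r [[xB2]; [xA2]; [xB1]]).
Proof.
  pose proof (fun p r => R1_decoding_orders Ptot ai aj p r hai hij) as hR1.
  pose proof (fun p r => R2_decoding_orders Ptot ai aj p r hai hij) as hR2.
  split; [| split; [| split; [exact hR1 | exact hR2]]].
  - intros r (p & hp & hr).
    destruct (hR1 p r hp hr) as [hi hj].
    split; [exact (proj1 hr) |].
    exists p; split; [exact hp |].
    now exists [[xA1]; [xB2]; [xA2]], [[xB1; xB2]].
  - intros r (p & hp & hr).
    destruct (hR2 p r hp hr) as [hi hj].
    split; [exact (proj1 hr) |].
    exists p; split; [exact hp |].
    now exists [[xA1]; [xA2]], [[xB2]; [xA2]; [xB1]].
Qed.
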